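(* Let $U$ be a commutative supertropical semiring, $M:=eU$, $\gamma:M\to N$ a surjective homomorphism onto a bipotent semiring $N$, $V:=U/F(U,\gamma)$, and $\alpha:=\sigma_V\circ\pi_{F(U,\gamma)}:U\to\hat V$ (the initial transmission from $U$ to a supertropical semiring covering $\gamma$). Then for $x_1,x_2\in U$ we have $\alpha(x_1)=\alpha(x_2)$ if and only if either $x_1=x_2$, or $x_1,x_2\in D(U,\gamma)$ and $\gamma(ex_1)=\gamma(ex_2)$, or $\gamma(ex_1)=\gamma(ex_2)=0$.
   Context: All monoids are commutative. A supertropical monoid is a monoid $(U,\cdot)$ with absorbing element $0$ and distinguished idempotent $e$ with $ex=0\Rightarrow x=0$, together with a total ordering on $M:=eU$, compatible with multiplication and with $0$ least, making $M$ a bipotent semiring (addition $=\max$). A supertropical semiring is a supertropical monoid for which the addition $x+y:=y$ if $ex<ey$, $x$ if $ex>ey$, $ex$ if $ex=ey$ is associative and distributive. For a TE-relation $E$, $U/E$ carries the unique supertropical monoid structure making $\pi_E$ a transmission (multiplicative map preserving $0,1,e$ and order on ghosts). $F(U,\gamma)$: $x\sim y$ iff $x=y$, or $x,y\in M$ with $\gamma(x)=\gamma(y)$, or $\gamma(ex)=\gamma(ey)=0$; ghost ideal of $U/F(U,\gamma)$ identified with $N$. For a supertropical monoid $V$ with ghost ideal $N$: $D(V):=N\cup\{yz: y,z\in V,\ \exists y'\in N,\ y'<ey,\ y'z=eyz\}$; $\hat V:=V/E(V,D(V))$ where $x\sim y$ iff $x=y$ or ($x,y\in D(V)$, $ex=ey$);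 $\sigma_V$ the projection. A $\gamma$-NC-product in $U$ is an element $x=yz$ with $y,z\in U$ such that some $y'\in M$ satisfies $\gamma(y')<\gamma(ey)$ and $\gamma(y'z)=\gamma(eyz)$; $D(U,\gamma):=M\cup\{\gamma\text{-NC-products}\}$. *)

From Stdlib Require Import ClassicalEpsilon.

Set Implicit Arguments.

(** A supertropical monoid: multiplication, 1, 0, distinguished idempotent e,
    and an order relation [sle] on the ghost ideal M = eU. *)
Record stmonoid := STM {
  car :> Type;
  smul : car -> car -> car;
  sone : car;
  szero : car;
  se : car;
  sle : car -> car -> Prop }.

Definition ghost (U : stmonoid) (x : U) : Prop := smul U (se U) x = x.
Definition slt (U : stmonoid) (a b : U) : Prop := sle U a b /\ a <> b.

Definition is_stmonoid (U : stmonoid) : Prop :=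
  (forall x y z : U, smul U x (smul U y z) = smul U (smul U x y) z) /\
  (forall x y : U, smul U x y = smul U y x) /\
  (forall x : U, smul U (sone U) x = x) /\
  (forall x : U, smul U (szero U) x = szero U) /\
  smul U (se U) (se U) = se U /\
  (forall x : U, smul U (se U) x = szero U -> x = szero U) /\
  (forall x y : U, sle U x y -> ghost U x /\ ghost U y) /\
  (forall x : U, ghost U x -> sle U x x) /\
  (forall x y : U, sle U x y -> sle U y x -> x = y) /\
  (forall x y z : U, sle U x y -> sle U y z -> sle U x z) /\
  (forall x y : U, ghost U x -> ghost U y -> sle U x y \/ sle U y x) /\
  (forall x y z : U, ghost U z -> sle U x y -> sle U (smul U x z) (smul U y z)) /\
  (forall x : U, ghost U x -> sle U (szero U) x).

Definition sadd (U : stmonoid) (x y : U) : U :=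
  let ex := smul U (se U) x in
  let ey := smul U (se U) y in
  match excluded_middle_informative (slt U ex ey) with
  | left _ => y
  | right _ =>
      match excluded_middle_informative (slt U ey ex) with
      | left _ => x
      | right _ => ex
      end
  end.

Definition is_stsemiring (U : stmonoid) : Prop :=
  is_stmonoid U /\
  (forall x y z : U, sadd U x (sadd U y z) = sadd U (sadd U x y) z) /\
  (forall x y z : U, smul U x (sadd U y z) = sadd U (smul U x y) (smul U x z)).

Record bsemiring := BS {
  bcar :> Type;
  badd : bcar -> bcar -> bcar;
  bmul : bcar -> bcar -> bcar;
  bzero : bcar;
  bone : bcar }.

Definition is_bipotent_semiring (N : bsemiring) : Prop :=
  (forall a b c : N, badd N a (badd N b c) = badd N (badd N a b) c) /\
  (forall a b : N, badd N a b = badd N b a) /\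
  (forall a : N, badd N (bzero N) a = a) /\
  (forall a b c : N, bmul N a (bmul N b c) = bmul N (bmul N a b) c) /\
  (forall a b : N, bmul N a b = bmul N b a) /\
  (forall a : N, bmul N (bone N) a = a) /\
  (forall a : N, bmul N (bzero N) a = bzero N) /\
  (forall a b c : N, bmul N a (badd N b c) = badd N (bmul N a b) (bmul N a c)) /\
  (forall a b : N, badd N a b = a \/ badd N a b = b).

Definition ble (N : bsemiring) (a b : N) : Prop := badd N a b = b.
Definition blt (N : bsemiring) (a b : N) : Prop := ble N a b /\ a <> b.

(** gamma : M -> N semiring homomorphism (given as a function on U, only its
    values on M = eU matter) *)
Definition is_hom_M {U : stmonoid} {N : bsemiring} (g : U -> N) : Prop :=
  (forall x y : U, ghost U x -> ghost U y -> g (smul U x y) = bmul N (g x) (g y)) /\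
  (forall x y : U, ghost U x -> ghost U y -> g (sadd U x y) = badd N (g x) (g y)) /\
  g (szero U) = bzero N /\
  g (se U) = bone N.

Definition surj_M {U : stmonoid} {N : bsemiring} (g : U -> N) : Prop :=
  forall n : N, exists x : U, ghost U x /\ g x = n.

(** Quotient of a supertropical monoid by an (TE-)equivalence E: carrier is the
    set of E-classes; operations via representatives; order on ghosts induced. *)
Definition qcar {U : stmonoid} (E : U -> U -> Prop) : Type :=
  {P : U -> Prop | exists x, P = E x}.
Definition qproj {U : stmonoid} (E : U -> U -> Prop) (x : U) : qcar E :=
  exist _ (E x) (ex_intro _ x eq_refl).
Definition qrep {U : stmonoid} (E : U -> U -> Prop) (c : qcar E) : U :=
  proj1_sig (constructive_indefinite_description _ (proj2_sig c)).
Definition quotient {U : stmonoid} (E : U -> U -> Prop) : stmonoid :=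
  @STM (qcar E)
    (fun c d => qproj E (smul U (qrep c) (qrep d)))
    (qproj E (sone U)) (qproj E (szero U)) (qproj E (se U))
    (fun c d => exists a b : U, ghost U a /\ ghost U b /\ sle U a b /\
                  qproj E a = c /\ qproj E b = d).

Definition Frel {U : stmonoid} {N : bsemiring} (g : U -> N) (x y : U) : Prop :=
  x = y \/ (ghost U x /\ ghost U y /\ g x = g y) \/
  (g (smul U (se U) x) = bzero N /\ g (smul U (se U) y) = bzero N).

Definition DV (V : stmonoid) (x : V) : Prop :=
  ghost V x \/
  exists y z : V, x = smul V y z /\
    exists y' : V, ghost V y' /\ slt V y' (smul V (se V) y) /\
      smul V y' z = smul V (se V) (smul V y z).

Definition ErelD {V : stmonoid} (D : V -> Prop) (x y : V) : Prop :=
  x = y \/ (D x /\ D y /\ smul V (se V) x = smul V (se V) y).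

Definition hat (V : stmonoid) : stmonoid := quotient (ErelD (DV V)).
Definition sigmaV (V : stmonoid) (x : V) : hat V := qproj (ErelD (DV V)) x.

Definition Vof {U : stmonoid} {N : bsemiring} (g : U -> N) : stmonoid :=
  quotient (Frel g).
Definition alpha {U : stmonoid} {N : bsemiring} (g : U -> N) (x : U)
  : hat (Vof g) :=
  sigmaV (Vof g) (qproj (Frel g) x).

Definition NCprod {U : stmonoid} {N : bsemiring} (g : U -> N) (x : U) : Prop :=
  exists y z : U, x = smul U y z /\
    exists y' : U, ghost U y' /\ blt N (g y') (g (smul U (se U) y)) /\
      g (smul U y' z) = g (smul U (se U) (smul U y z)).
Definition DUg {U : stmonoid} {N : bsemiring} (g : U -> N) (x : U) : Prop :=
  ghost U x \/ NCprod g x.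

From Stdlib Require Import ClassicalEpsilon FunctionalExtensionality PropExtensionality Classical.
From Stdlib Require Import RelationClasses.

(* α(x1) = α(x2) says that the F(U,γ)-classes of x1 and x2 are equal in V, or
   both lie in D(V) and have the same ghost.  The ghost ideal of V is N via γ,
   so equal ghosts means γ(e x1) = γ(e x2); and a class with nonzero ghost lies
   in D(V) exactly when its representative lies in D(U,γ), because an
   NC-product in V, read on representatives, is a γ-NC-product in U and
   conversely (the order of V on ghosts being the order of N). *)

Lemma exist_ext (A : Type) (P : A -> Prop) (x y : A) (p : P x) (q : P y) :
  x = y -> exist P x p = exist P y q.
Proof. intros ->. f_equal. apply proof_irrelevance. Qed.

Lemma qproj_eq_iff {U : stmonoid} (E : U -> U -> Prop) `{Equivalence U E} (a b : U) :
  qproj E a = qproj E b <-> E a b.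
Proof.
  split.
  - intro Hab. assert (HE : E a = E b) by exact (f_equal (@proj1_sig _ _) Hab).
    rewrite HE. reflexivity.
  - intro Hab. apply exist_ext.
    apply functional_extensionality; intro y; apply propositional_extensionality.
    split; intro; [symmetry in Hab |]; etransitivity; eassumption.
Qed.

Lemma qproj_qrep {U : stmonoid} (E : U -> U -> Prop) (c : qcar E) :
  qproj E (qrep c) = c.
Proof.
  destruct c as [P p]. unfold qproj, qrep. apply exist_ext. simpl.
  destruct (constructive_indefinite_description _ p) as [x Hx]. simpl.
  symmetry. exact Hx.
Qed.

Lemma qproj_surj {U : stmonoid} (E : U -> U -> Prop) (c : qcar E) :
  exists y, c = qproj E y.
Proof. exists (qrep c). symmetry. apply qproj_qrep. Qed.

#[local] Instance ErelD_equiv {V : stmonoid} (D : V -> Prop) : Equivalence (ErelD D).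
Proof.
  split.
  - intro x. left; reflexivity.
  - intros x y [Hxy | (Dx & Dy & Hxy)]; [left | right]; auto.
  - intros x y z [<- | (Dx & Dy & Hxy)] [<- | (Dy' & Dz & Hyz)];
      solve [left; reflexivity | right; repeat split; congruence].
Qed.

#[local] Instance Frel_equiv {U : stmonoid} {N : bsemiring} (g : U -> N) :
  Equivalence (Frel g).
Proof.
  unfold Frel, ghost. split.
  - intro x. left; reflexivity.
  - intros x y [Hxy | [Hxy | Hxy]]; [left | right; left | right; right];
      intuition congruence.
  - intros x y z [Hxy | [Hxy | Hxy]] [Hyz | [Hyz | Hyz]];
      first [ left; congruence
            | right; left; repeat split; intuition congruence
            | right; right; split; intuition congruence ].
Qed.

Section Ghosts.

Context {U : stmonoid} (HM : is_stmonoid U).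

Lemma ghost_e_mul x : ghost U (smul U (se U) x).
Proof.
  destruct HM as (Hassoc & _ & _ & _ & Hee & _).
  unfold ghost. rewrite Hassoc, Hee. reflexivity.
Qed.

Lemma ghost_mulr a b : ghost U a -> ghost U (smul U a b).
Proof.
  destruct HM as (Hassoc & _).
  unfold ghost. intro Ha. rewrite Hassoc, Ha. reflexivity.
Qed.

Lemma ghost_mul_e a b : ghost U a -> smul U a b = smul U a (smul U (se U) b).
Proof.
  destruct HM as (Hassoc & Hcomm & _).
  unfold ghost. intro Ha. rewrite Hassoc, (Hcomm a (se U)), Ha. reflexivity.
Qed.

Lemma sadd_sle a b : sle U a b -> sadd U a b = b.
Proof.
  destruct HM as (_ & _ & _ & _ & _ & _ & Hleg & _ & Hantisym & _).
  intro Hab. destruct (Hleg _ _ Hab) as [Ha Hb].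
  unfold sadd, ghost in *. cbv zeta. rewrite Ha, Hb.
  destruct (excluded_middle_informative (slt U a b)) as [_ | Hnlt]; [reflexivity |].
  destruct (excluded_middle_informative (slt U b a)) as [[Hba Hne] | _].
  - exfalso. apply Hne. apply Hantisym; assumption.
  - apply NNPP. intro Hne. apply Hnlt. split; assumption.
Qed.

End Ghosts.

Lemma ble_antisym {N : bsemiring} (HN : is_bipotent_semiring N) a b :
  ble N a b -> ble N b a -> a = b.
Proof.
  destruct HN as (_ & Hcomm & _).
  unfold ble. intros Hab Hba. rewrite Hcomm in Hba. congruence.
Qed.

Section FQuotient.

Context {U : stmonoid} {N : bsemiring} {g : U -> N}.
Context (HM : is_stmonoid U) (HN : is_bipotent_semiring N) (Hg : is_hom_M g).

Notation e := (smul U (se U)).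
Notation pi := (qproj (Frel g)).

Lemma pi_eq_iff a b : pi a = pi b <-> Frel g a b.
Proof. apply qproj_eq_iff. exact _. Qed.

Lemma hom_e_mul a b : g (e (smul U a b)) = bmul N (g (e a)) (g (e b)).
Proof.
  destruct HM as (Hassoc & _). destruct Hg as (gmul & _).
  rewrite Hassoc, (ghost_mul_e HM _ b (ghost_e_mul HM a)).
  apply gmul; apply ghost_e_mul; assumption.
Qed.

Lemma hom_sle a b : sle U a b -> ble N (g a) (g b).
Proof.
  destruct Hg as (_ & gadd & _).
  intro Hab. pose proof HM as (_ & _ & _ & _ & _ & _ & Hleg & _).
  destruct (Hleg _ _ Hab) as [Ha Hb].
  unfold ble. rewrite <- (gadd a b Ha Hb), (sadd_sle HM _ _ Hab). reflexivity.
Qed.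

Lemma Frel_ghost_iff a b : ghost U a -> ghost U b -> (Frel g a b <-> g a = g b).
Proof.
  unfold ghost. intros Ha Hb. split.
  - intros [-> | [(_ & _ & Hab) | (Ha0 & Hb0)]]; [reflexivity | exact Hab |].
    rewrite Ha in Ha0. rewrite Hb in Hb0. congruence.
  - intro Hab. right; left. auto.
Qed.

Lemma Frel_ghost_e_iff a b : Frel g (e a) (e b) <-> g (e a) = g (e b).
Proof. apply Frel_ghost_iff; apply ghost_e_mul; assumption. Qed.

Lemma Frel_mull a a' b : Frel g a a' -> Frel g (smul U a b) (smul U a' b).
Proof.
  intros [-> | [(Ha & Ha' & Haa') | (Ha & Ha')]].
  - reflexivity.
  - apply Frel_ghost_iff; try apply ghost_mulr; try assumption.
    destruct Hg as (gmul & _).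
    rewrite (ghost_mul_e HM a b Ha), (ghost_mul_e HM a' b Ha').
    rewrite (gmul a _ Ha (ghost_e_mul HM b)), (gmul a' _ Ha' (ghost_e_mul HM b)), Haa'.
    reflexivity.
  - right; right.
    destruct HN as (_ & _ & _ & _ & _ & _ & Hmul0 & _).
    rewrite !hom_e_mul, Ha, Ha'. split; apply Hmul0.
Qed.

Lemma Frel_mul a a' b b' :
  Frel g a a' -> Frel g b b' -> Frel g (smul U a b) (smul U a' b').
Proof.
  destruct HM as (_ & Hcomm & _).
  intros Haa' Hbb'. transitivity (smul U a' b); [apply Frel_mull; assumption |].
  rewrite (Hcomm a' b), (Hcomm a' b'). apply Frel_mull; assumption.
Qed.

Lemma Vof_mul a b : smul (Vof g) (pi a) (pi b) = pi (smul U a b).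
Proof.
  change (pi (smul U (qrep (pi a)) (qrep (pi b))) = pi (smul U a b)).
  apply pi_eq_iff, Frel_mul; apply pi_eq_iff, qproj_qrep.
Qed.

Lemma Vof_e_mul b : smul (Vof g) (se (Vof g)) (pi b) = pi (e b).
Proof. apply Vof_mul. Qed.

Lemma ghost_Vof_iff x : ghost (Vof g) (pi x) <-> Frel g (e x) x.
Proof. unfold ghost. rewrite Vof_e_mul. apply pi_eq_iff. Qed.

Lemma ghost_Vof a : ghost U a -> ghost (Vof g) (pi a).
Proof. intro Ha. apply ghost_Vof_iff. rewrite Ha. reflexivity. Qed.

Lemma Vof_slt_ghost a b : ghost U a -> ghost U b ->
  slt (Vof g) (pi a) (pi b) -> blt N (g a) (g b).
Proof.
  intros Ha Hb [(a' & b' & Ha' & Hb' & Hab' & Ea & Eb) Hne].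
  apply pi_eq_iff in Ea, Eb.
  apply Frel_ghost_iff in Ea, Eb; try assumption.
  split.
  - rewrite <- Ea, <- Eb. apply hom_sle. exact Hab'.
  - intro Hab. apply Hne. apply pi_eq_iff.
    apply Frel_ghost_iff; assumption.
Qed.

Lemma blt_Vof_slt a b : ghost U a -> ghost U b ->
  blt N (g a) (g b) -> slt (Vof g) (pi a) (pi b).
Proof.
  pose proof HM as (_ & _ & _ & _ & _ & _ & _ & _ & _ & _ & Htot & _).
  intros Ha Hb [Hle Hne]. split.
  - destruct (Htot a b Ha Hb) as [Hab | Hba].
    + exists a, b. repeat split; assumption.
    + exfalso. apply Hne. apply (ble_antisym HN); [exact Hle | apply hom_sle; exact Hba].
  - intro Hab. apply Hne. apply pi_eq_iff in Hab.
    apply Frel_ghost_iff in Hab; assumption.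
Qed.

(* The hypothesis cannot be dropped: the class of an element of γ-value 0 is a
   ghost of V even when the element is not in D(U,γ). *)
Lemma DV_Vof_DUg x : g (e x) <> bzero N -> DV (Vof g) (pi x) -> DUg g x.
Proof.
  intros Hnz [Hgh | (c & d & Hx & c' & Hc' & Hlt & Hnc)].
  - apply ghost_Vof_iff in Hgh.
    destruct Hgh as [Hex | [(_ & Hx & _) | (_ & Hx0)]].
    + left. exact Hex.
    + left. exact Hx.
    + contradiction.
  - destruct (qproj_surj _ c) as [y ->], (qproj_surj _ d) as [z ->],
      (qproj_surj _ c') as [w ->].
    rewrite Vof_mul in Hx. apply pi_eq_iff in Hx.
    destruct Hx as [-> | [(Hx & _) | (Hx0 & _)]];
      [| left; exact Hx | contradiction].
    right. exists y, z. split; [reflexivity |].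
    exists (e w). split; [apply ghost_e_mul; assumption |].
    apply ghost_Vof_iff, pi_eq_iff in Hc'.
    rewrite <- Hc', Vof_e_mul in Hlt. rewrite <- Hc', !Vof_mul, Vof_e_mul in Hnc.
    apply pi_eq_iff in Hnc.
    apply (Frel_ghost_iff _ _ (ghost_mulr HM _ z (ghost_e_mul HM w)) (ghost_e_mul HM _))
      in Hnc.
    split; [| exact Hnc].
    apply Vof_slt_ghost; try apply ghost_e_mul; assumption.
Qed.

Lemma DUg_DV_Vof x : DUg g x -> DV (Vof g) (pi x).
Proof.
  intros [Hx | (y & z & -> & y' & Hy' & Hlt & Hnc)].
  - left. apply ghost_Vof. exact Hx.
  - right. exists (pi y), (pi z). split; [symmetry; apply Vof_mul |].
    exists (pi y'). split; [apply ghost_Vof; exact Hy' |]. split.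
    + rewrite Vof_e_mul. apply blt_Vof_slt; [exact Hy' | apply (ghost_e_mul HM) | exact Hlt].
    + rewrite !Vof_mul, Vof_e_mul. apply pi_eq_iff.
      apply Frel_ghost_iff; [apply (ghost_mulr HM), Hy' | apply (ghost_e_mul HM) | exact Hnc].
Qed.

Lemma alpha_eq_iff x1 x2 :
  alpha g x1 = alpha g x2 <->
  Frel g x1 x2 \/ (DV (Vof g) (pi x1) /\ DV (Vof g) (pi x2) /\ g (e x1) = g (e x2)).
Proof.
  unfold alpha, sigmaV. rewrite (qproj_eq_iff (ErelD (DV (Vof g)))).
  unfold ErelD. rewrite !Vof_e_mul, !pi_eq_iff, Frel_ghost_e_iff. reflexivity.
Qed.

End FQuotient.

Theorem corollary4p10 (U : stmonoid) (HU : is_stsemiring U)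
  (N : bsemiring) (HN : is_bipotent_semiring N)
  (g : U -> N) (Hg : is_hom_M g) (Hsurj : surj_M g) (x1 x2 : U) :
  alpha g x1 = alpha g x2 <->
  (x1 = x2 \/
   (DUg g x1 /\ DUg g x2 /\ g (smul U (se U) x1) = g (smul U (se U) x2)) \/
   (g (smul U (se U) x1) = bzero N /\ g (smul U (se U) x2) = bzero N)).
Proof.
  pose proof (proj1 HU) as HM.
  rewrite alpha_eq_iff by assumption. split.
  - intros [[Heq | [(Hx1 & Hx2 & He) | Hzero]] | (D1 & D2 & He)].
    + left. exact Heq.
    + right; left. unfold ghost in Hx1, Hx2. rewrite Hx1, Hx2.
      repeat split; [left | left |]; assumption.
    + right; right. exact Hzero.
    + destruct (classic (g (smul U (se U) x1) = bzero N)) as [Hz | Hnz].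
      * right; right. split; congruence.
      * right; left. repeat split; [| | exact He];
          apply (DV_Vof_DUg HM HN Hg); congruence || assumption.
  - intros [-> | [(D1 & D2 & He) | Hzero]].
    + left. reflexivity.
    + right. repeat split; [| | exact He]; apply (DUg_DV_Vof HM HN Hg); assumption.
    + left. right; right. exact Hzero.
Qed.
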